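(* Let $n\ge 3$ and consider the representations $\zeta'_i:\mathrm{TVB}_n\to\mathrm{GL}_{n+1}(\mathbb{C})$, $1\le i\le 7$, given by $\zeta'_i(\sigma_k)=L_k(S)$, $\zeta'_i(\rho_k)=L_k(R)$ ($1\le k\le n-1$), $\zeta'_i(\gamma_j)=L_j(G)$ ($1\le j\le n$), where: (1) $\zeta'_1$: $S=\begin{pmatrix}0&b\\ c&0\end{pmatrix}$, $R=\begin{pmatrix}0&-\frac{\sqrt b}{\sqrt c}\\ -\frac{\sqrt c}{\sqrt b}&0\end{pmatrix}$, $G=\mathrm{diag}(-1,1)$; (2) $\zeta'_2$: $S=\begin{pmatrix}0&b\\ c&0\end{pmatrix}$, $R=\begin{pmatrix}0&\frac{\sqrt b}{\sqrt c}\\ \frac{\sqrt c}{\sqrt b}&0\end{pmatrix}$, $G=\mathrm{diag}(-1,1)$; (3) $\zeta'_3$: $S,R$ as in (1), $G=I_2$; (4) $\zeta'_4$: $S,R$ as in (2), $G=I_2$; (5) $\zeta'_5$: $S=I_2$, $R=\begin{pmatrix}0&x\\ \frac1x&0\end{pmatrix}$, $G=\mathrm{diag}(-1,1)$; (6) $\zeta'_6$: $S=I_2$, $R=\begin{pmatrix}0&x\\ \frac1x&0\end{pmatrix}$, $G=I_2$; (7) $\zeta'_7$: $S=R=G=I_2$; with $b,c,x\in\mathbb{C}\setminus\{0\}$ and $\sqrt b,\sqrt c$ square roots of $b,c$. Then every $\zeta'_i$ is reducible to degree $n$: the line spanned by the last standard basis vector $e_{n+1}$ is invariant under all $\zeta'_i(g)$,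 and the subspace $\mathrm{span}(e_1,\dots,e_n)$ is invariant as well. Furthermore, for $1\le i\le 4$, if $bc\neq 1$ then the $n$-dimensional subrepresentation of $\zeta'_i$ on $\mathrm{span}(e_1,\dots,e_n)$ is irreducible (i.e. $\zeta'_i$ is not further reducible).
   Context: For $n\ge 2$, the twisted virtual braid group $\mathrm{TVB}_n$ is the group with generators $\sigma_1,\dots,\sigma_{n-1}$, $\rho_1,\dots,\rho_{n-1}$, $\gamma_1,\dots,\gamma_n$ and defining relations: $\sigma_i\sigma_{i+1}\sigma_i=\sigma_{i+1}\sigma_i\sigma_{i+1}$; $\sigma_i\sigma_j=\sigma_j\sigma_i$ ($|i-j|\ge2$); $\rho_i^2=1$; $\rho_i\rho_j=\rho_j\rho_i$ ($|i-j|\ge 2$); $\rho_i\rho_{i+1}\rho_i=\rho_{i+1}\rho_i\rho_{i+1}$; $\sigma_i\rho_j=\rho_j\sigma_i$ ($|i-j|\ge 2$); $\rho_i\rho_{i+1}\sigma_i=\sigma_{i+1}\rho_i\rho_{i+1}$; $\gamma_i^2=1$; $\gamma_i\gamma_j=\gamma_j\gamma_i$; $\gamma_j\rho_i=\rho_i\gamma_j$ and $\gamma_j\sigma_i=\sigma_i\gamma_j$ ($|i-j|\ge 2$); $\rho_i\gamma_i=\gamma_{i+1}\rho_i$; $\rho_i\sigma_i\rho_i=\gamma_{i+1}\gamma_i\sigma_i\gamma_i\gamma_{i+1}$. For a $2\times2$ matrix $M$ and $1\le i\le n$, $L_i(M)$ denotes the $(n+1)\times(n+1)$ block-diagonal matrix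 $\mathrm{diag}(I_{i-1},M,I_{n-i})$. A representation on $V$ is irreducible if $V$ has no nonzero proper subspace invariant under all the representing matrices. *)

(* The field C of complex numbers is modelled as
   [complex R] = R[i] for an arbitrary [R : realType] (a complete
   archimedean ordered field, i.e. a copy of the reals). *)
From HB Require Import structures.
From mathcomp Require Import all_boot all_order all_algebra.
From mathcomp Require Import reals.
From mathcomp.real_closed Require Import complex.
Set Implicit Arguments. Unset Strict Implicit. Unset Printing Implicit Defensive.
Import Order.TTheory GRing.Theory Num.Theory.
Local Open Scope ring_scope.

(* L_k(M) = diag(I_{k-1}, M, I_{n-k}) as an (n+1)x(n+1) matrix, 1 <= k <= n.
   With 0-based indices, the block M sits on rows/columns k-1 and k. *)
Definition Lmx {F : nzRingType} (n k : nat) (M : 'M[F]_2) : 'M[F]_(n.+1) :=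
  \matrix_(i < n.+1, j < n.+1)
    if [&& (k.-1 <= i)%N, (i <= k)%N, (k.-1 <= j)%N & (j <= k)%N]
    then M (inord (i - k.-1)) (inord (j - k.-1))
    else (i == j)%:R.

Definition tvb_gen_images {F : nzRingType} (n : nat) (S R G : 'M[F]_2)
  (M : 'M[F]_(n.+1)) : Prop :=
  (exists k, [/\ (1 <= k)%N, (k <= n.-1)%N & (M = Lmx n k S \/ M = Lmx n k R)])
  \/ (exists j, [/\ (1 <= j)%N, (j <= n)%N & M = Lmx n j G]).

Inductive gen_by {F : fieldType} (N : nat) (P : 'M[F]_N.+1 -> Prop)
  : 'M[F]_N.+1 -> Prop :=
| gen_by1 : gen_by P 1%:M
| gen_by_mul g M : P g -> gen_by P M -> gen_by P (g *m M)
| gen_by_inv g M : P g -> gen_by P M -> gen_by P (invmx g *m M).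

(* A subspace of F^N (column vectors) is encoded by a matrix V whose rows
   (transposed) span it.  It is mx_invariant under the linear map v |-> M v
   iff every row v of V satisfies (M v^T)^T = v M^T in the row space of V. *)
Definition mx_invariant {F : fieldType} (m N : nat) (V : 'M[F]_(m, N)) (M : 'M[F]_N) : bool :=
  (V *m M^T <= V)%MS.

Definition zeta_data {F : fieldType} (i : nat) (b c x sb sc : F)
  : 'M[F]_2 * 'M[F]_2 * 'M[F]_2 :=
  let S0 : 'M[F]_2 := \matrix_(p < 2, q < 2)
      (if (p == 0) && (q == 1) then b else if (p == 1) && (q == 0) then c else 0) in
  let R1 : 'M[F]_2 := \matrix_(p < 2, q < 2)
      (if (p == 0) && (q == 1) then - (sb / sc)
       else if (p == 1) && (q == 0) then - (sc / sb) else 0) in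
  let R2 : 'M[F]_2 := \matrix_(p < 2, q < 2)
      (if (p == 0) && (q == 1) then sb / sc
       else if (p == 1) && (q == 0) then sc / sb else 0) in
  let Rx : 'M[F]_2 := \matrix_(p < 2, q < 2)
      (if (p == 0) && (q == 1) then x
       else if (p == 1) && (q == 0) then x^-1 else 0) in
  let Gd : 'M[F]_2 := \matrix_(p < 2, q < 2)
      (if p == q then (if p == 0 then -1 else 1) else 0) in
  let I2 : 'M[F]_2 := 1%:M in
  match i with
  | 1 => (S0, R1, Gd)
  | 2 => (S0, R2, Gd)
  | 3 => (S0, R1, I2)
  | 4 => (S0, R2, I2)
  | 5 => (I2, Rx, Gd)
  | 6 => (I2, Rx, I2)
  | _ => (I2, I2, I2)
  end.

Definition zeta_image {F : fieldType} (n i : nat) (b c x sb sc : F)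
  : 'M[F]_(n.+1) -> Prop :=
  let '(Sm, Rm, Gm) := zeta_data i b c x sb sc in
  @gen_by F n (@tvb_gen_images F n Sm Rm Gm).

Arguments zeta_image {F} n i b c x sb sc _.
Arguments tvb_gen_images {F} n S R G M.
Arguments Lmx {F} n k M.

(* Coordinates are numbered from 1.  For k < n the block of L_k(Y) avoids the
   last coordinate, and L_n(G) is diagonal there because G is; so every
   generator image commutes with the projection onto e_(n+1), which makes
   span(e_1, ..., e_n) and the line of e_(n+1) invariant.
   For irreducibility write L_k(Y) = I + U^T (Y - I) U, the rows of U being
   e_k and e_(k+1).  As R S = t I with t^2 = b c <> 1, the image of R S
   yields the projection P_k = E_k + E_(k+1) onto span(e_k, e_(k+1)), and
   products of these isolate every coordinate projection E_j, j <= n; hence a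
   nonzero invariant W contains some e_j.  Since S is antidiagonal with
   nonzero entries, L_k(S)^T maps e_k and e_(k+1) onto nonzero multiples of
   each other, so W contains all of e_1, ..., e_n. *)

From HB Require Import structures.
From mathcomp Require Import all_boot all_order all_algebra.
From mathcomp Require Import reals.
From mathcomp.real_closed Require Import complex.
From mathcomp Require Import zify ring.
Import Order.TTheory GRing.Theory Num.Theory.
Local Open Scope ring_scope.
Set Implicit Arguments. Unset Strict Implicit. Unset Printing Implicit Defensive.

Ltac decide_nat_tests :=
  repeat match goal with
  | |- context [(?x <= ?y)%N] =>
      let E := fresh in case E: (x <= y)%N; try (exfalso; lia)
  | |- context [(?x == ?y :> nat)] =>
      let E := fresh in case E: (x == y); try (exfalso; lia)
  end.

Section Stability.
Variable F : fieldType.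

Lemma stablemxZ m N (V : 'M[F]_(m, N)) (f : 'M[F]_N) a :
  stablemx V f -> stablemx V (a *: f).
Proof. by move=> Vf; rewrite -mul_scalar_mx; apply: stablemxM (stablemxC _ _) Vf. Qed.

Lemma stablemx_invmx m N (V : 'M[F]_(m, N)) (f : 'M[F]_N) :
  stablemx V f -> stablemx V (invmx f).
Proof.
move=> Vf; have [f_unit | /invmx_out-> //] := boolP (f \in unitmx).
have sub_Vf : (V <= V *m f)%MS.
  by have [_ <-] := mxrank_leqif_sup Vf; rewrite mxrankMfree ?row_free_unit.
by rewrite -[X in (_ <= X)%MS](mulmxK f_unit) submxMr.
Qed.

Lemma mx_invariant_gen_by N m (V : 'M[F]_(m, N.+1)) (P : 'M[F]_N.+1 -> Prop) M :
  (forall g, P g -> mx_invariant V g) -> gen_by P M -> mx_invariant V M.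
Proof.
rewrite /mx_invariant => PV; elim=> [|g {}M Pg _ VM|g {}M Pg _ VM].
- by rewrite trmx1 stablemxC.
- by rewrite trmx_mul; apply: stablemxM VM (PV g Pg).
- by rewrite trmx_mul trmx_inv; apply: stablemxM VM (stablemx_invmx (PV g Pg)).
Qed.

Lemma gen_by_gen N (P : 'M[F]_N.+1 -> Prop) g : P g -> gen_by P g.
Proof. by move=> Pg; rewrite -[g]mulmx1; apply: gen_by_mul (gen_by1 _). Qed.

Lemma exists_basis_sub m N (W : 'M[F]_(m, N)) :
  W != 0 -> (forall j, stablemx W (delta_mx j j)) -> exists j, ((delta_mx 0 j : 'rV_N) <= W)%MS.
Proof.
case/matrix0Pn=> i [j Wij] W_stable; exists j.
have row_delta : row i W *m delta_mx j j = W i j *: delta_mx 0 j.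
  apply/rowP => l; rewrite !mxE (bigD1 j) //= big1 => [|l' /negbTE l'j].
    by rewrite !mxE !eqxx addr0 eq_sym.
  by rewrite !mxE l'j mulr0.
rewrite -(eqmx_scale _ Wij) -row_delta.
exact: submx_trans (submxMr _ (row_sub i W)) (W_stable j).
Qed.

End Stability.

Lemma nat_pred_constant (P : pred nat) n :
  (forall j, (j.+1 < n)%N -> P j = P j.+1) ->
  forall i j, (i < n)%N -> (j < n)%N -> P i = P j.
Proof.
move=> step; suff P_0 i : (i < n)%N -> P i = P 0.
  by move=> i j /P_0-> /P_0->.
by elim: i => // i IH lt_i; rewrite -step ?IH //; lia.
Qed.

Lemma trmx_Lmx (F : nzRingType) n k (Y : 'M[F]_2) : (Lmx n k Y)^T = Lmx n k Y^T.
Proof.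
apply/matrixP => i j; rewrite !mxE.
by case: (k.-1 <= i)%N; case: (i <= k)%N; case: (k.-1 <= j)%N; case: (j <= k)%N;
  rewrite //= eq_sym.
Qed.

Section BlockFrame.
Variables (F : fieldType) (n k : nat).
Hypothesis k_range : (0 < k <= n)%N.

Definition Lframe : 'M[F]_(2, n.+1) :=
  \matrix_(p < 2, j < n.+1) ((j : nat) == (k.-1 + p)%N)%:R.

Lemma row_Lframe (p : 'I_2) : row p Lframe = delta_mx 0 (inord (k.-1 + p)).
Proof.
apply/rowP => j; rewrite !mxE eqxx -val_eqE /= inordK //.
by have := ltn_ord p; lia.
Qed.

Lemma Lframe_mul_tr : Lframe *m Lframe^T = 1%:M.
Proof.
apply/row_matrixP => p; rewrite row_mul row_Lframe -rowE -tr_col row1.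
apply/rowP => q; rewrite !mxE eqxx inordK ?eqn_add2l 1?eq_sym //.
by have := ltn_ord p; lia.
Qed.

Lemma Lmx_frame (Y : 'M[F]_2) :
  Lmx n k Y = 1%:M + Lframe^T *m (Y - 1%:M) *m Lframe.
Proof.
have inord_0 : inord 0 = ord0 :> 'I_2 by apply: val_inj; rewrite /= inordK.
have inord_1 : inord 1 = lift ord0 ord0 :> 'I_2 by apply: val_inj; rewrite /= inordK.
apply/matrixP => -[i lt_i] [j lt_j].
rewrite !mxE !big_ord_recl !big_ord0 !mxE /= !big_ord_recl !big_ord0 !mxE /=.
move: k_range; case: k => // a _ /=.
rewrite (_ : bump 0 0 = 1) // addn0 addn1 (_ : (Ordinal lt_i == Ordinal lt_j) = (i == j)) //.
(have [->|[->|i_out]] : i = a \/ i = a.+1 \/ (i < a)%N || (a.+1 < i)%N by lia);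
  (have [->|[->|j_out]] : j = a \/ j = a.+1 \/ (j < a)%N || (a.+1 < j)%N by lia);
  rewrite ?subnn ?subSnn ?inord_0 ?inord_1; decide_nat_tests; rewrite /=; ring.
Qed.

Lemma LmxM (A B : 'M[F]_2) : Lmx n k A *m Lmx n k B = Lmx n k (A *m B).
Proof.
rewrite !Lmx_frame.
have -> : A *m B - 1%:M = (B - 1%:M) + ((A - 1%:M) + (A - 1%:M) *m (B - 1%:M)).
  rewrite mulmxBl !mulmxBr !mul1mx !mulmx1 addrCA (addrCA (B - 1%:M)) subrr.
  by rewrite addr0 [RHS]addrC -addrA addKr.
move: (A - 1%:M) (B - 1%:M) => X Z.
have UXU : Lframe^T *m X *m Lframe *m (Lframe^T *m Z *m Lframe)
           = Lframe^T *m (X *m Z) *m Lframe.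
  by rewrite -!mulmxA (mulmxA Lframe) Lframe_mul_tr mul1mx.
by rewrite mulmxDl !mulmxDr !mul1mx mulmx1 UXU !mulmxDl -addrA.
Qed.

Lemma Lmx_scalar a :
  Lmx n k a%:M = 1%:M + (a - 1) *: (Lframe^T *m Lframe).
Proof.
rewrite Lmx_frame.
have -> : a%:M - 1%:M = (a - 1)%:M :> 'M[F]_2 by apply/matrixP => i j; rewrite !mxE mulrnBl.
by rewrite mul_mx_scalar scalemxAl.
Qed.

Lemma tr_Lframe_mul :
  Lframe^T *m Lframe = delta_mx (inord k.-1) (inord k.-1) + delta_mx (inord k) (inord k).
Proof.
have eq_inord l (i : 'I_n.+1) : (l <= n)%N -> (i == inord l) = (i == l :> nat).
  by move=> le_ln; rewrite -val_eqE /= inordK.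
have [k_pos le_kn] := andP k_range; have le_k1n : (k.-1 <= n)%N by lia.
apply/matrixP => i j; rewrite !mxE !big_ord_recl big_ord0 !mxE /= addr0.
by rewrite (_ : bump 0 0 = 1) // addn0 addn1 prednK // !eq_inord // -!natrM !mulnb.
Qed.

Lemma Lframe_mul_Lmx (Y : 'M[F]_2) : Lframe *m Lmx n k Y = Y *m Lframe.
Proof.
rewrite Lmx_frame mulmxDr mulmx1 !mulmxA Lframe_mul_tr mul1mx.
by rewrite -{1}[Lframe]mul1mx -mulmxDl addrC subrK.
Qed.

Lemma basis_mul_Lmx (p : 'I_2) (Y : 'M[F]_2) :
  'e_(inord (k.-1 + p)) *m Lmx n k Y
  = Y p 0 *: 'e_(inord k.-1) + Y p 1 *: 'e_(inord k) :> 'rV[F]_n.+1.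
Proof.
rewrite -row_Lframe -row_mul Lframe_mul_Lmx row_mul mulmx_sum_row.
rewrite !big_ord_recl big_ord0 addr0 !row_Lframe addn0 !mxE.
rewrite /= (_ : bump 0 0 = 1) // addn1 prednK ?(andP k_range).1 //.
by congr (Y p _ *: _ + Y p _ *: _); apply: val_inj.
Qed.

End BlockFrame.

Lemma comm_delta_mx (F : fieldType) N (A : 'M[F]_N) l :
  (forall i, i != l -> A i l = 0 /\ A l i = 0) -> comm_mx A (delta_mx l l).
Proof.
move=> A_l; have col_l : col l A = A l l *: delta_mx l 0.
  apply/colP => i; rewrite !mxE eqxx andbT mulr_natr.
  by have [-> | /A_l[]] := eqVneq i l.
have row_l : row l A = A l l *: delta_mx 0 l.
  apply/rowP => j; rewrite !mxE eqxx mulr_natr eq_sym.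
  by have [-> | /A_l[]] := eqVneq j l.
rewrite /comm_mx -(mul_delta_mx (0 : 'I_1) l l) mulmxA -colE col_l.
by rewrite -mulmxA -rowE row_l -scalemxAl scalemxAr.
Qed.

Lemma copid_mx_last (F : fieldType) n : copid_mx n = delta_mx ord_max ord_max :> 'M[F]_n.+1.
Proof.
apply/matrixP => i j; rewrite !mxE val_eqE.
have [<- | /negbTE ij] := eqVneq i j; last first.
  rewrite andFb subrr; have [ei|] //= := eqVneq i ord_max.
  by rewrite -ei eq_sym ij.
rewrite andbb -val_eqE /= ltn_neqAle -ltnS ltn_ord andbT.
by case: (i == n :> nat); rewrite ?subr0 ?subrr.
Qed.

Section LastCoordinate.
Variables (F : fieldType) (n : nat).

Lemma eqmx_basis_last :
  (('e_ord_max : 'rV[F]_n.+1) :=: (delta_mx ord_max ord_max : 'M[F]_n.+1))%MS.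
Proof.
set l : 'I_n.+1 := ord_max.
apply/eqmxP/andP; split.
  by rewrite -(mul_delta_mx l (0 : 'I_1) l) submxMl.
by rewrite -(mul_delta_mx (0 : 'I_1) l l) submxMl.
Qed.

Lemma mx_invariant_comm_last (M : 'M[F]_n.+1) :
  comm_mx M (delta_mx ord_max ord_max) ->
  mx_invariant ('e_ord_max : 'rV[F]_n.+1) M /\ mx_invariant (pid_mx n : 'M[F]_n.+1) M.
Proof.
rewrite /mx_invariant => commM.
have commMT : comm_mx (delta_mx ord_max ord_max) M^T.
  by rewrite /comm_mx -[delta_mx _ _]trmx_delta -!trmx_mul commM.
split; first by rewrite (eqmx_stable _ eqmx_basis_last) comm_mx_stable.
apply: comm_mx_stable; rewrite -[pid_mx n](subKr 1%:M) -/(copid_mx n) copid_mx_last.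
exact: comm_mx_sym (comm_mxB (comm_mx1 _) (comm_mx_sym commMT)).
Qed.

End LastCoordinate.

Lemma Lmx_comm_last (F : fieldType) n k (Y : 'M[F]_2) :
  (k < n)%N || (Y 0 1 == 0) && (Y 1 0 == 0) ->
  comm_mx (Lmx n k Y) (delta_mx ord_max ord_max).
Proof.
move=> Y_last; apply: comm_delta_mx => i i_max.
have i_lt : (i < n)%N by move: i_max; rewrite -val_eqE /=; have := ltn_ord i; lia.
rewrite !mxE (negbTE i_max) eq_sym (negbTE i_max) /=.
have [k_n | k_n] := eqVneq k n; last by rewrite !ifF //; lia.
have [i_n1 | i_n1] := eqVneq (i : nat) n.-1; last by rewrite !ifF //; lia.
subst k; move: Y_last; rewrite ltnn /= => /andP[/eqP Y01 /eqP Y10].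
have inord_0 : inord (i - n.-1) = 0 :> 'I_2 by apply: val_inj; rewrite /= inordK; lia.
have inord_1 : inord (n - n.-1) = 1 :> 'I_2 by apply: val_inj; rewrite /= inordK; lia.
by rewrite !ifT ?inord_0 ?inord_1 //; lia.
Qed.

Lemma tvb_image_reducible (F : fieldType) n (S R G : 'M[F]_2) M :
  G 0 1 = 0 -> G 1 0 = 0 -> gen_by (tvb_gen_images n S R G) M ->
  mx_invariant ('e_ord_max : 'rV[F]_n.+1) M /\ mx_invariant (pid_mx n : 'M[F]_n.+1) M.
Proof.
move=> G01 G10 genM.
have gen_comm g : tvb_gen_images n S R G g -> comm_mx g (delta_mx ord_max ord_max).
  case=> [[k [k_pos k_le [->|->]]] | [j [_ _ ->]]]; apply: Lmx_comm_last;
    by rewrite ?G01 ?G10 ?eqxx ?orbT //; apply/orP; left; lia.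
by split; apply: (mx_invariant_gen_by _ genM) => g /gen_comm/mx_invariant_comm_last[].
Qed.

Section Irreducibility.
Variables (F : fieldType) (n : nat) (S R G : 'M[F]_2) (t : F) (W : 'M[F]_n.+1).
Hypotheses (n_gt2 : (2 < n)%N) (RS : R *m S = t%:M) (t_neq1 : t != 1).
Hypotheses (S00 : S 0 0 = 0) (S11 : S 1 1 = 0) (S01 : S 0 1 != 0) (S10 : S 1 0 != 0).
Hypotheses (W_pid : (W <= (pid_mx n : 'M[F]_n.+1))%MS)
  (W_inv : forall M, gen_by (tvb_gen_images n S R G) M -> mx_invariant W M).

Local Notation e j := ('e_(inord j) : 'rV[F]_n.+1).
Local Notation E j := (delta_mx (inord j) (inord j) : 'M[F]_n.+1).

Lemma stable_Lmx k (Y : 'M[F]_2) :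
  (0 < k < n)%N -> Y = S \/ Y = R -> stablemx W (Lmx n k Y)^T.
Proof.
move=> /andP[k_pos k_lt] Y_SR; apply/W_inv/gen_by_gen; left.
by exists k; split; [lia | lia | case: Y_SR => ->; [left | right]].
Qed.

Lemma stable_coord_proj_pair j : (j.+1 < n)%N -> stablemx W (E j + E j.+1).
Proof.
move=> lt_j1n; have k_range : (0 < j.+1 <= n)%N by lia.
have k_lt : (0 < j.+1 < n)%N by lia.
have := stablemxM (stable_Lmx k_lt (or_introl erefl)) (stable_Lmx k_lt (or_intror erefl)).
rewrite -trmx_mul LmxM // RS trmx_Lmx tr_scalar_mx Lmx_scalar // tr_Lframe_mul //=.
have stable_N1 : stablemx W (- 1%:M) by rewrite stablemxN stablemxC.
move=> /stablemxD /(_ stable_N1) /(stablemxZ (t - 1)^-1).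
by rewrite addrAC subrr add0r scalerA mulVf ?scale1r // subr_eq0.
Qed.

Lemma coord_proj_pair_mul j :
  (j.+2 <= n)%N -> (E j + E j.+1) *m (E j.+1 + E j.+2) = E j.+1.
Proof.
move=> le_j2n; have neq_inord a b : (a <= n)%N -> (b <= n)%N -> a != b ->
    (inord a == inord b :> 'I_n.+1) = false.
  by move=> le_an le_bn /negbTE neq_ab; rewrite -val_eqE /= !inordK.
rewrite mulmxDl !mulmxDr !mul_delta_mx_cond eqxx !neq_inord //; try lia.
by rewrite !mulr0n !mulr1n !addr0 add0r.
Qed.

Lemma stable_coord_proj j : (j < n)%N -> stablemx W (E j).
Proof.
(* Indices from 0, P_j := E_j + E_(j+1):
   E_(j+1) = P_j P_(j+1),  E_0 = P_0 - E_1,  E_(n-1) = P_(n-2) - E_(n-2). *)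
have stable_mid i : (i.+2 < n)%N -> stablemx W (E i.+1).
  move=> lt_i2n; rewrite -coord_proj_pair_mul; last lia.
  by apply: stablemxM; apply: stable_coord_proj_pair; lia.
case: j => [_ | j lt_j1n].
  rewrite -(addrK (E 1) (E 0)); apply: stablemxD.
    by apply: stable_coord_proj_pair; lia.
  by rewrite stablemxN; apply: stable_mid.
have [lt_j2n | le_nj2] := ltnP j.+2 n; first exact: stable_mid.
case: j lt_j1n le_nj2 => [| i lt_i2n le_ni3]; first lia.
rewrite -(addKr (E i.+1) (E i.+2)); apply: stablemxD.
  by rewrite stablemxN; apply: stable_mid; lia.
by apply: stable_coord_proj_pair; lia.
Qed.

Lemma W_mul_delta_last : W *m (delta_mx ord_max ord_max : 'M[F]_n.+1) = 0.
Proof.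
by case/submxP: W_pid => D ->; rewrite -mulmxA -copid_mx_last mul_pid_mx_copid ?mulmx0.
Qed.

Lemma stable_delta_mx (j : 'I_n.+1) : stablemx W (delta_mx j j).
Proof.
have [lt_jn | le_nj] := ltnP j n; first by have := stable_coord_proj lt_jn; rewrite inord_val.
have -> : j = ord_max by apply: val_inj; have := ltn_ord j; rewrite /=; lia.
by rewrite W_mul_delta_last sub0mx.
Qed.

Lemma basis_sub_succ j : (j.+1 < n)%N -> (e j <= W)%MS = (e j.+1 <= W)%MS.
Proof.
move=> lt_j1n; have k_range : (0 < j.+1 <= n)%N by lia.
have k_lt : (0 < j.+1 < n)%N by lia.
have := stable_Lmx k_lt (or_introl erefl); rewrite trmx_Lmx => stable_T.
have := basis_mul_Lmx k_range 0 S^T; have := basis_mul_Lmx k_range 1 S^T.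
rewrite /= addn0 addn1 !mxE S00 S11 !scale0r add0r addr0 => e_j1 e_j.
apply/idP/idP => e_sub.
  by rewrite -(eqmx_scale _ S10) -e_j (submx_trans (submxMr _ e_sub)).
by rewrite -(eqmx_scale _ S01) -e_j1 (submx_trans (submxMr _ e_sub)).
Qed.

Lemma tvb_irreducible :
  (W == (0 : 'M[F]_n.+1))%MS || (W == (pid_mx n : 'M[F]_n.+1))%MS.
Proof.
have [-> | W_neq0] := eqVneq W 0; first by rewrite /= sub0mx.
have [j0 e_j0] := exists_basis_sub W_neq0 stable_delta_mx.
have lt_j0n : (j0 < n)%N.
  rewrite ltnNge; apply/negP => le_nj0.
  have j0_max : j0 = ord_max by apply: val_inj; have := ltn_ord j0; rewrite /=; lia.
  move: e_j0; rewrite j0_max => /(submxMr (delta_mx ord_max ord_max : 'M[F]_n.+1)).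
  rewrite W_mul_delta_last mul_delta_mx submx0 => /eqP/matrixP/(_ 0 ord_max)/eqP.
  by rewrite !mxE !eqxx oner_eq0.
have e_sub j : (j < n)%N -> (e j <= W)%MS.
  move=> lt_jn.
  rewrite (nat_pred_constant (P := fun j => (e j <= W)%MS) basis_sub_succ lt_jn lt_j0n).
  by rewrite inord_val.
apply/orP; right; apply/andP; split => //; apply/row_subP => a.
have [lt_an | le_na] := ltnP a n.
  have -> : row a (pid_mx n) = e a.
    by apply/rowP => l; rewrite !mxE inord_val eqxx lt_an andbT eq_sym.
  exact: e_sub.
have -> : row a (pid_mx n : 'M[F]_n.+1) = 0.
  by apply/rowP => l; rewrite !mxE ltnNge le_na andbF.
exact: sub0mx.
Qed.

End Irreducibility.

Definition antidiag2 {F : nzRingType} (u v : F) : 'M[F]_2 :=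
  \matrix_(p < 2, q < 2)
    (if (p == 0) && (q == 1) then u else if (p == 1) && (q == 0) then v else 0).

Lemma antidiag2_mul (F : comNzRingType) (u v u' v' t : F) :
  u * v' = t -> v * u' = t -> antidiag2 u v *m antidiag2 u' v' = t%:M.
Proof.
move=> uv' vu'; apply/matrixP => p q; rewrite !mxE !big_ord_recl big_ord0 !mxE.
case: p q => [[|[|//]] ?] [[|[|//]] ?] /=;
  by rewrite ?mul0r ?mulr0 ?add0r ?addr0 ?mulr1n ?mulr0n.
Qed.

Lemma tvb_antidiag_irreducible (F : fieldType) n (b c u v : F) (G : 'M[F]_2)
    (W : 'M[F]_n.+1) :
  (2 < n)%N -> b != 0 -> c != 0 -> u * c = v * b -> u * c != 1 ->
  (W <= (pid_mx n : 'M[F]_n.+1))%MS ->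
  (forall M, gen_by (tvb_gen_images n (antidiag2 b c) (antidiag2 u v) G) M ->
     mx_invariant W M) ->
  (W == (0 : 'M[F]_n.+1))%MS || (W == (pid_mx n : 'M[F]_n.+1))%MS.
Proof.
move=> n_gt2 b0 c0 uc_vb uc_neq1; apply: (tvb_irreducible (t := u * c)); rewrite ?mxE //.
exact: antidiag2_mul.
Qed.

Theorem theorem3p7 (R : realType) (n i : nat) (b c x sb sc : complex R) :
  (3 <= n)%N -> (1 <= i <= 7)%N ->
  b != 0 -> c != 0 -> x != 0 -> sb ^+ 2 = b -> sc ^+ 2 = c ->
  (forall M, zeta_image n i b c x sb sc M ->
     mx_invariant (delta_mx 0 ord_max : 'rV[complex R]_(n.+1)) M
     /\ mx_invariant (pid_mx n : 'M[complex R]_(n.+1)) M)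
  /\ ((i <= 4)%N -> b * c != 1 ->
      forall W : 'M[complex R]_(n.+1),
        (W <= (pid_mx n : 'M[complex R]_(n.+1)))%MS ->
        (forall M, zeta_image n i b c x sb sc M -> mx_invariant W M) ->
        (W == (0 : 'M[complex R]_(n.+1)))%MS || (W == (pid_mx n : 'M[complex R]_(n.+1)))%MS).
Proof.
move=> n_ge3 i_range b0 c0 _ sb2 sc2; split.
  move=> M; rewrite /zeta_image.
  have : (zeta_data i b c x sb sc).2 0 1 = 0 /\ (zeta_data i b c x sb sc).2 1 0 = 0.
    by case: i {i_range} => [|[|[|[|[|[|[|i]]]]]]]; rewrite /= !mxE.
  by case: zeta_data => [[S Rho] G] /= [G01 G10]; apply: tvb_image_reducible.
move=> le_i4 bc_neq1 W W_pid.
have sb0 : sb != 0 by apply: contraNneq b0 => sb_0; rewrite -sb2 sb_0 expr0n.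
have sc0 : sc != 0 by apply: contraNneq c0 => sc_0; rewrite -sc2 sc_0 expr0n.
have irreducible_for u v G : u * c = v * b -> (u * c) ^+ 2 = b * c ->
    (forall M, gen_by (tvb_gen_images n (antidiag2 b c) (antidiag2 u v) G) M ->
       mx_invariant W M) ->
    (W == (0 : 'M_n.+1))%MS || (W == (pid_mx n : 'M_n.+1))%MS.
  move=> uc_vb uc2; apply: tvb_antidiag_irreducible => //.
  by apply: contraNneq bc_neq1 => uc1; rewrite -uc2 uc1 expr1n.
have : i = 1 \/ i = 2 \/ i = 3 \/ i = 4 by lia.
case=> [|[|[|]]] ->; rewrite /zeta_image /= => W_inv;
  by apply: irreducible_for W_inv; rewrite -sb2 -sc2; field; rewrite ?sb0 ?sc0.
Qed.
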